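(* Let $E$ be a symmetric Banach function space on $[0,\alpha)$, $0<\alpha\le\infty$. If $E$ is strictly monotone then $E=E_0$.
   Context: $\mu(f)$ is the decreasing rearrangement of $f$, $\mu(\infty,f)=\lim_{t\to\infty}\mu(t,f)$, and $E_0=\{f\in E:\mu(\infty,f)=0\}$. $E$ is symmetric if $g\in E$, $\mu(f)\le\mu(g)$ imply $f\in E$ and $\|f\|_E\le\|g\|_E$. $E$ is strictly monotone if $0\le f\le g$, $f\ne g$ in $E$ imply $\|f\|_E<\|g\|_E$. *)

From mathcomp Require Import all_boot all_order all_algebra.
From mathcomp Require Import all_classical all_reals all_analysis.
Import Order.TTheory GRing.Theory Num.Theory.
Set Implicit Arguments. Unset Strict Implicit. Unset Printing Implicit Defensive.
Local Open Scope classical_set_scope.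
Local Open Scope ring_scope.

Definition dom0 (R : realType) (a : \bar R) : set R :=
  [set x | 0 <= x /\ (x%:E < a)%E].

Definition L0 (R : realType) (a : \bar R) (f : R -> R) : Prop :=
  measurable_fun (dom0 a) f.

Definition ae_on (R : realType) (a : \bar R) (P : R -> Prop) : Prop :=
  (@lebesgue_measure R).-negligible [set x | dom0 a x /\ ~ P x].

Definition distrib (R : realType) (a : \bar R) (f : R -> R) (s : R) : \bar R :=
  (@lebesgue_measure R) [set x | dom0 a x /\ s < `|f x|].

Definition mu (R : realType) (a : \bar R) (f : R -> R) (t : R) : \bar R :=
  ereal_inf [set s%:E | s in [set s : R | 0 <= s /\ (distrib a f s <= t%:E)%E]].

Definition mu_inf (R : realType) (a : \bar R) (f : R -> R) : \bar R :=
  lim (mu a f t @[t --> +oo]).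

(* (E, nrm) is a Banach function space on [0,a): a linear subspace of L0
   with a complete norm (functions equal a.e. identified), which is an ideal:
   g in L0, |g| <= |f| a.e., f in E  ==>  g in E and ||g|| <= ||f||. *)
Definition banach_function_space (R : realType) (a : \bar R)
    (E : set (R -> R)) (nrm : (R -> R) -> R) : Prop :=
  (forall f, E f -> L0 a f) /\
      E (fun _ => 0) /\
      (forall f g, E f -> E g -> E (f \+ g)) /\
      (forall (k : R) f, E f -> E (fun x => k * f x)) /\
      (forall f, E f -> 0 <= nrm f /\ (nrm f = 0 <-> ae_on a (fun x => f x = 0))) /\
      (forall (k : R) f, E f -> nrm (fun x => k * f x) = `|k| * nrm f) /\
      (forall f g, E f -> E g -> nrm (f \+ g) <= nrm f + nrm g) /\
      (forall f g, E f -> L0 a g -> ae_on a (fun x => `|g x| <= `|f x|) ->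
          E g /\ nrm g <= nrm f) /\
      (forall u : nat -> R -> R, (forall n, E (u n)) ->
         (forall e : R, 0 < e -> exists N : nat, forall m n : nat,
             (N <= m)%N -> (N <= n)%N -> nrm (u m \- u n) < e) ->
         exists f, E f /\ (nrm (u n \- f) @[n --> \oo] --> 0)).

Definition symmetric_space (R : realType) (a : \bar R)
    (E : set (R -> R)) (nrm : (R -> R) -> R) : Prop :=
  forall f g, E g -> L0 a f -> (forall t : R, 0 < t -> (mu a f t <= mu a g t)%E) ->
    E f /\ nrm f <= nrm g.

Definition strictly_monotone (R : realType) (a : \bar R)
    (E : set (R -> R)) (nrm : (R -> R) -> R) : Prop :=
  forall f g, E f -> E g ->
    ae_on a (fun x => 0 <= f x /\ f x <= g x) ->
    ~ ae_on a (fun x => f x = g x) ->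
    nrm f < nrm g.

Definition E0 (R : realType) (a : \bar R) (E : set (R -> R)) : set (R -> R) :=
  [set f | E f /\ mu_inf a f = 0%E].

From mathcomp Require Import all_boot all_order all_algebra.
From mathcomp Require Import all_classical all_reals all_analysis.
Import Order.TTheory GRing.Theory Num.Theory.
Local Open Scope classical_set_scope.
Local Open Scope ring_scope.

(* Since t |-> mu(t, f) is nonincreasing, mu(oo, f) is the infimum of the
   rearrangement. On a finite interval [0, r) the distribution function never
   exceeds r, so mu(r, f) = 0 and there is nothing to prove. On [0, oo), if
   mu(t, f) >= e > 0 for all t, then the constant e belongs to E by symmetry;
   the function e 1_[1,oo) has the same rearrangement (the constant e), so by
   symmetry both have the same norm, while strict monotonicity makes the
   truncated one strictly smaller. *)

Section rearrangement.
Variables (R : realType) (a : \bar R).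
Implicit Types (f : R -> R) (c e s t : R).

Lemma mu_ge0 f t : (0 <= mu a f t)%E.
Proof. by apply: le_ereal_inf_tmp => _ [s [s0 _] <-]; rewrite lee_fin. Qed.

Lemma mu_nonincreasing f : {homo mu a f : t t' / t <= t' >-> (t' <= t)%E}.
Proof.
move=> t t' tt'; apply: ereal_inf_le_tmp => _ [s [s0 hs] <-].
by exists s => //; split => //; apply: (le_trans hs); rewrite lee_fin.
Qed.

Lemma mu_le f t s : 0 <= s -> (distrib a f s <= t%:E)%E -> (mu a f t <= s%:E)%E.
Proof. by move=> s0 hs; apply: ge_ereal_inf; exists s%:E => //; exists s. Qed.

Lemma le_mu f t e :
  (forall s, 0 <= s -> (distrib a f s <= t%:E)%E -> e <= s) -> (e%:E <= mu a f t)%E.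
Proof. by move=> He; apply: le_ereal_inf_tmp => _ [s [s0 hs] <-]; rewrite lee_fin He. Qed.

Lemma mu_infE f : mu_inf a f = ereal_inf (range (mu a f)).
Proof. exact/cvg_lim/nonincreasing_cvge/mu_nonincreasing. Qed.

Lemma mu_inf_ge0 f : (0 <= mu_inf a f)%E.
Proof. by rewrite mu_infE; apply: le_ereal_inf_tmp => _ [t _ <-]; exact: mu_ge0. Qed.

Lemma mu_inf_eq0 f :
  (forall e, 0 < e -> ~ (forall t, (e%:E <= mu a f t)%E)) -> mu_inf a f = 0%E.
Proof.
move=> Hf; apply/le_anti; rewrite mu_inf_ge0 andbT mu_infE.
apply/lee_addgt0Pr => e e0; rewrite add0e leNgt; apply/negP => e_lt_inf.
apply: (Hf e e0) => t; apply/ltW/(lt_le_trans e_lt_inf)/ge_ereal_inf.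
by exists (mu a f t) => //; exists t.
Qed.

Lemma mu_cst_le c t : 0 <= c -> 0 <= t -> (mu a (cst c) t <= c%:E)%E.
Proof.
move=> c0 t0; apply: mu_le => //.
rewrite /distrib (_ : [set x | _ /\ _] = set0) ?measure0 ?lee_fin //.
by apply/seteqP; split => x //= [_]; rewrite ger0_norm // ltxx.
Qed.

Lemma mu_scale_indic_ge (A : set R) e t :
  A `<=` dom0 a -> lebesgue_measure A = +oo%E -> 0 < e ->
  (e%:E <= mu a (fun x => (e * \1_A x)%R) t)%E.
Proof.
move=> Adom Aoo e0; apply: le_mu => s s0; rewrite leNgt; apply: contraTle => se.
rewrite /distrib (_ : [set x | _ /\ _] = A) ?Aoo ?ltry //.
apply/seteqP; split => x /=.
  by move=> [_]; rewrite indicE; case: (boolP (x \in A)) => [/set_mem //|_];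
    rewrite mulr0 normr0 ltNge s0.
move=> Ax; split; first exact: Adom.
by rewrite indicE mem_set // mulr1 gtr0_norm.
Qed.

End rearrangement.

Section almost_everywhere.
Variables (R : realType) (a : \bar R).

Lemma ae_onW (P : R -> Prop) : (forall x, P x) -> ae_on a P.
Proof. by move=> HP; exists set0; split => // x [_ /(_ (HP x))]. Qed.

Lemma not_ae_on (P : R -> Prop) (A : set R) :
  measurable A -> (0 < lebesgue_measure A)%E ->
  (forall x, A x -> dom0 a x /\ ~ P x) -> ~ ae_on a P.
Proof.
move=> mA A_gt0 AnP [N [mN N0 sN]].
have : (lebesgue_measure A <= lebesgue_measure N)%E.
  by apply: le_measure; rewrite ?inE // => x /AnP /sN.
by rewrite N0 leNgt A_gt0.
Qed.

End almost_everywhere.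

Lemma dom0_EFin (R : realType) (r : R) : dom0 r%:E = `[0, r[%classic.
Proof.
apply/seteqP; split => x /=; rewrite /dom0 /= in_itv /= lte_fin; first by case=> -> ->.
by case/andP => -> ->.
Qed.

Lemma dom0_pinfty (R : realType) : dom0 (+oo%E : \bar R) = `[0, +oo[%classic.
Proof.
apply/seteqP; split => x /=; rewrite /dom0 /= in_itv /= andbT; first by case.
by move=> ->; split => //; exact: ltry.
Qed.

Lemma mu_inf_EFin (R : realType) (r : R) (f : R -> R) :
  0 < r -> L0 r%:E f -> mu_inf r%:E f = 0%E.
Proof.
move=> r0 Lf; apply/le_anti; rewrite mu_inf_ge0 andbT mu_infE.
apply: ge_ereal_inf; exists (mu r%:E f r); first by exists r.
apply: mu_le => //; rewrite /distrib.
have mdom : measurable (dom0 r%:E) by rewrite dom0_EFin; exact: measurable_itv.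
apply: (@le_trans _ _ (lebesgue_measure (dom0 r%:E))).
  apply: le_measure; rewrite ?inE //; last by move=> x [].
  have -> : [set x | dom0 r%:E x /\ 0 < `|f x|] = dom0 r%:E `&` f @^-1` (~` [set 0]).
    apply/seteqP; split => x /= [dx hx]; split => //.
      by move=> fx0; move: hx; rewrite fx0 normr0 ltxx.
    by rewrite normr_gt0; apply/eqP.
  by apply: Lf => //; apply: measurableC; exact: measurable_set1.
by rewrite dom0_EFin lebesgue_measure_itv /= lte_fin r0 oppr0 adde0.
Qed.

Lemma mu_inf_pinfty (R : realType) (E : set (R -> R)) (nrm : (R -> R) -> R) :
  banach_function_space +oo%E E nrm -> symmetric_space +oo%E E nrm ->
  strictly_monotone +oo%E E nrm ->
  forall f, E f -> mu_inf +oo%E f = 0%E.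
Proof.
move=> [_ [_ [_ [_ [_ [_ [_ [ideal _]]]]]]]] sym strict f Ef.
apply: mu_inf_eq0 => e e0 mu_f_ge.
pose A : set R := `[1, +oo[%classic.
pose h : R -> R := cst e.
pose g : R -> R := fun x => e * \1_A x.
have Lh : L0 +oo%E h by exact: measurable_cst.
have Lg : L0 +oo%E g.
  apply: measurable_realfun.measurable_funM; first exact: measurable_cst.
  by apply: measurable_realfun.measurable_indic; exact: measurable_itv.
have mu_h t : 0 < t -> (mu +oo%E h t <= e%:E)%E.
  by move=> t0; apply: mu_cst_le; exact: ltW.
have mu_g t : (e%:E <= mu +oo%E g t)%E.
  apply: mu_scale_indic_ge => //; last by rewrite lebesgue_measure_itv /= ltry.
  by rewrite dom0_pinfty => x; rewrite /A /= !in_itv /= !andbT; exact: le_trans ler01.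
have g_le_h x : 0 <= g x <= h x.
  by rewrite /g /h indicE; case: (x \in A); rewrite ?mulr1 ?mulr0 lexx ltW.
have [Eh _] : E h /\ nrm h <= nrm f.
  by apply: sym => // t t0; exact: le_trans (mu_h t t0) (mu_f_ge t).
have [Eg _] : E g /\ nrm g <= nrm h.
  apply: ideal => //; apply: ae_onW => x; have /andP[g0 gh] := g_le_h x.
  by rewrite !ger0_norm //; exact: le_trans gh.
have [_ nrm_h_le] : E h /\ nrm h <= nrm g.
  by apply: sym => // t t0; exact: le_trans (mu_h t t0) (mu_g t).
suff : nrm g < nrm h by rewrite ltNge nrm_h_le.
apply: strict => //; first by apply: ae_onW => x; have /andP[] := g_le_h x.
apply: (@not_ae_on _ _ _ `[0, 1[%classic); first exact: measurable_itv.
  by rewrite lebesgue_measure_itv /= lte_fin ltr01 oppr0 adde0 lte_fin.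
move=> x /=; rewrite in_itv /= => /andP[x0 x1]; split.
  by rewrite dom0_pinfty /= in_itv /= x0.
rewrite /g /h indicE memNset ?mulr0; last by rewrite /A /= in_itv /= andbT leNgt x1.
by apply/eqP; rewrite /= (lt_eqF e0).
Qed.

Theorem mainTheorem12 (R : realType) (a : \bar R) (ha : (0 < a)%E)
    (E : set (R -> R)) (nrm : (R -> R) -> R) :
  banach_function_space a E nrm ->
  symmetric_space a E nrm ->
  strictly_monotone a E nrm ->
  E = E0 a E.
Proof.
move=> bfs sym strict; apply/seteqP; split => f; last by case.
move=> Ef; split => //; move: ha bfs sym strict.
case: a => [r | | ] // a_gt0 bfs sym strict.
- exact: mu_inf_EFin a_gt0 (bfs.1 f Ef).
- exact: mu_inf_pinfty bfs sym strict f Ef.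
Qed.
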